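(* Let $n\ge 2$. The function $\mathbf{H}:[0,1]^n\to[0,1]$ is a pre-aggregation function.
   Context: For $\mathbf{x}\in[0,1]^n$ let $x_{(1)}\ge\dots\ge x_{(n)}$ be its entries in decreasing order, and define the median $Med(\mathbf{x})=\frac12(x_{(k)}+x_{(k+1)})$ if $n=2k$ and $Med(\mathbf{x})=x_{(k+1)}$ if $n=2k+1$. Define $f_i(\mathbf{x})=\frac1n$ if $x_1=\dots=x_n$, and otherwise $f_i(\mathbf{x})=\frac{1}{n-1}\Big(1-\frac{|x_i-Med(\mathbf{x})|}{\sum_{j=1}^n|x_j-Med(\mathbf{x})|}\Big)$. Then $\mathbf{H}(\mathbf{x})=\sum_{i=1}^n f_i(\mathbf{x})\,x_i$. For a nonzero $\mathbf{r}\in\mathbb{R}^n$, $F:[0,1]^n\to[0,1]$ is $\mathbf{r}$-increasing if $F(\mathbf{x})\le F(x_1+tr_1,\dots,x_n+tr_n)$ for all $\mathbf{x}\in[0,1]^n$ and $t>0$ with $(x_1+tr_1,\dots,x_n+tr_n)\in[0,1]^n$. $F$ is a pre-aggregation function if $F(0,\dots,0)=0$, $F(1,\dots,1)=1$ and $F$ is $\mathbf{r}$-increasing for some nonzero $\mathbf{r}\in[0,1]^n$. *)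

From mathcomp Require Import all_boot all_order all_algebra.
From mathcomp Require Import reals.
Set Implicit Arguments. Unset Strict Implicit. Unset Printing Implicit Defensive.
Import Order.TTheory GRing.Theory Num.Theory.
Local Open Scope ring_scope.

Section Defs.
Variables (R : realType) (n : nat).

Definition in_unit_cube (x : 'I_n -> R) : Prop := forall i, 0 <= x i <= 1.

(* entries of x sorted in decreasing order: x_(1) >= ... >= x_(n);
   (decr_sorted x)`_j is x_(j+1) (0-indexed) *)
Definition decr_sorted (x : 'I_n -> R) : seq R :=
  sort (fun a b : R => b <= a) [seq x i | i <- enum 'I_n].

(* Med(x) = (x_(k) + x_(k+1))/2 if n = 2k, x_(k+1) if n = 2k+1 (1-indexed) *)
Definition Med (x : 'I_n -> R) : R :=
  let s := decr_sorted x in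
  let k := n./2 in
  if odd n then s`_k else (s`_(k.-1) + s`_k) / 2.

Definition all_equal (x : 'I_n -> R) : bool := [forall i, forall j, x i == x j].

Definition f_weight (x : 'I_n -> R) (i : 'I_n) : R :=
  if all_equal x then n%:R^-1
  else (n.-1)%:R^-1 *
       (1 - `|x i - Med x| / \sum_(j < n) `|x j - Med x|).

Definition H (x : 'I_n -> R) : R := \sum_(i < n) f_weight x i * x i.

Definition r_increasing (F : ('I_n -> R) -> R) (r : 'I_n -> R) : Prop :=
  forall (x : 'I_n -> R) (t : R), in_unit_cube x -> 0 < t ->
    in_unit_cube (fun i => x i + t * r i) ->
    F x <= F (fun i => x i + t * r i).

Definition pre_aggregation (F : ('I_n -> R) -> R) : Prop :=
  (forall x, in_unit_cube x -> 0 <= F x <= 1) /\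
  F (fun _ => 0) = 0 /\ F (fun _ => 1) = 1 /\
  exists r : 'I_n -> R, in_unit_cube r /\ (exists i, r i != 0) /\
    r_increasing F r.

End Defs.

From mathcomp Require Import all_boot all_order all_algebra.
From mathcomp Require Import reals.
From mathcomp Require Import lra zify.
Set Implicit Arguments. Unset Strict Implicit. Unset Printing Implicit Defensive.
Import Order.TTheory GRing.Theory Num.Theory.
Local Open Scope ring_scope.

(* The weights f_i are nonnegative and sum to 1, so H is a mean of its
   arguments: it maps [0,1]^n into [0,1] and fixes constant vectors.  The
   weights only see the deviations x_i - Med(x), and the median commutes with
   translations along the diagonal, so H(x + t(1,...,1)) = H(x) + t; hence H
   is (1,...,1)-increasing. *)

Section MedianWeightedMean.
Variables (R : realType) (n : nat).

Lemma size_decr_sorted (x : 'I_n -> R) : size (decr_sorted x) = n.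
Proof. by rewrite size_sort size_map size_enum_ord. Qed.

Lemma decr_sortedD (x : 'I_n -> R) c :
  decr_sorted (fun i => x i + c) = [seq a + c | a <- decr_sorted x].
Proof.
rewrite /decr_sorted (map_comp (+%R^~ c) x); symmetry.
by apply: (map_sort (leT' := fun a b : R => b <= a)) => a b /=; rewrite lerD2r.
Qed.

Lemma MedD (x : 'I_n -> R) c : (0 < n)%N -> Med (fun i => x i + c) = Med x + c.
Proof.
move=> n_gt0; have half_lt : (n./2 < n)%N by rewrite ltn_half_double; lia.
have half_pred_lt : (n./2.-1 < n)%N by apply: leq_ltn_trans half_lt; exact: leq_pred.
rewrite /Med decr_sortedD !(nth_map 0) ?size_decr_sorted //.
by case: (odd n) => //; lra.
Qed.

Lemma all_equalD (x : 'I_n -> R) c :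
  all_equal (fun i => x i + c) = all_equal x.
Proof.
by apply: eq_forallb => i; apply: eq_forallb => j; rewrite (inj_eq (addIr c)).
Qed.

Lemma f_weightD (x : 'I_n -> R) c i :
  f_weight (fun i => x i + c) i = f_weight x i.
Proof.
have n_gt0 : (0 < n)%N := leq_ltn_trans (leq0n i) (ltn_ord i).
have dev_shift j : `|x j + c - (Med x + c)| = `|x j - Med x|.
  by congr `|_|; lra.
rewrite /f_weight all_equalD MedD // dev_shift.
by under eq_bigr => j _ do rewrite dev_shift.
Qed.

Lemma not_all_equal_gt1 (x : 'I_n -> R) : ~~ all_equal x -> (1 < n)%N.
Proof.
apply: contraNT; rewrite -leqNgt => n_le1.
apply/forallP => i; apply/forallP => j.
suff -> : i = j by [].
by apply: val_inj; move: (ltn_ord i) (ltn_ord j) => /=; lia.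
Qed.

Lemma sum_dev_Med_gt0 (x : 'I_n -> R) :
  ~~ all_equal x -> 0 < \sum_(j < n) `|x j - Med x|.
Proof.
move=> not_eq; rewrite lt0r sumr_ge0 ?andbT //.
apply: contra not_eq => /eqP/psumr_eq0P dev0.
have at_Med j : x j = Med x.
  by apply/eqP; rewrite -subr_eq0 -normr_eq0 dev0 // => k _.
by apply/forallP => i; apply/forallP => j; rewrite !at_Med.
Qed.

Lemma f_weight_ge0 (x : 'I_n -> R) i : 0 <= f_weight x i.
Proof.
rewrite /f_weight; case: ifPn => [_|not_eq]; first by rewrite invr_ge0 ler0n.
rewrite mulr_ge0 ?invr_ge0 ?ler0n // subr_ge0.
rewrite ler_pdivrMr ?sum_dev_Med_gt0 // mul1r.
by rewrite (bigD1 i) //= lerDl sumr_ge0.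
Qed.

Lemma sum_f_weight (x : 'I_n -> R) : (0 < n)%N -> \sum_(i < n) f_weight x i = 1.
Proof.
move=> n_gt0; rewrite /f_weight.
have [eq_x|not_eq] := boolP (all_equal x); rewrite ?eq_x ?(negbTE not_eq).
  by rewrite sumr_const card_ord -[_ *+ n]mulr_natr mulVf // pnatr_eq0 -lt0n.
have n_gt1 := not_all_equal_gt1 not_eq.
rewrite -big_distrr /= sumrB sumr_const card_ord -mulr_suml.
rewrite mulfV ?lt0r_neq0 ?sum_dev_Med_gt0 //.
have -> : (1 : R) *+ n - 1 = n.-1%:R by rewrite -subn1 natrB //; lia.
by rewrite mulVf // pnatr_eq0; lia.
Qed.

Hypothesis n_gt0 : (0 < n)%N.

Lemma H_unit_interval (x : 'I_n -> R) : in_unit_cube x -> 0 <= H x <= 1.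
Proof.
move=> x01; apply/andP; split.
  by apply: sumr_ge0 => i _; rewrite mulr_ge0 ?f_weight_ge0 //; case/andP: (x01 i).
rewrite -(sum_f_weight x n_gt0); apply: ler_sum => i _.
by rewrite ler_piMr ?f_weight_ge0 //; case/andP: (x01 i).
Qed.

Lemma H_const (c : R) : H (fun _ : 'I_n => c) = c.
Proof. by rewrite /H -mulr_suml sum_f_weight // mul1r. Qed.

Lemma HD (x : 'I_n -> R) c : H (fun i => x i + c) = H x + c.
Proof.
rewrite /H; under eq_bigr => i _ do rewrite f_weightD mulrDr.
by rewrite big_split /= -mulr_suml sum_f_weight // mul1r.
Qed.

Lemma H_r_increasing_diag : r_increasing (@H R n) (fun _ => 1).
Proof. by move=> x t _ t_gt0 _; rewrite mulr1 HD lerDl ltW. Qed.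

End MedianWeightedMean.

Theorem corollary5 (R : realType) (n : nat) (hn : (2 <= n)%N) :
  pre_aggregation (@H R n).
Proof.
have n_gt0 : (0 < n)%N by lia.
split; [exact: H_unit_interval | split; [exact: H_const | split; first exact: H_const]].
exists (fun _ => 1); split; first by move=> i; rewrite ler01 lexx.
split; last exact: H_r_increasing_diag.
by exists (Ordinal n_gt0); rewrite oner_neq0.
Qed.
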